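(* Let $(\mathfrak g,N)$ be a finite-dimensional Nijenhuis perm algebra, $(V,\ell,r)$ a finite-dimensional representation of $\mathfrak g$, and $S:\mathfrak g\to\mathfrak g$, $\alpha,\beta:V\to V$ linear maps. The following are equivalent: (1) $(\mathfrak g\ltimes_{\ell,r}V,N+\alpha)$ is a Nijenhuis perm algebra and the linear map $S+\beta$ on $\mathfrak g\oplus V$ is admissible to it; (2) $(\mathfrak g\ltimes_{r^*-\ell^*,r^*}V^*,N+\beta^* )$ is a Nijenhuis perm algebra and the linear map $S+\alpha^*$ on $\mathfrak g\oplus V^*$ is admissible to it; (3) (a) $(V,\ell,r,\alpha)$ is a representation of $(\mathfrak g,N)$; (b) $S$ is admissible to $(\mathfrak g,N)$; (c) $\beta$ is admissible to $(\mathfrak g,N)$ on $(V,\ell,r)$; (d) for all $x\in\mathfrak g$, $u\in V$: $$\beta(\ell(x)\alpha(u))+\ell(S^2(x))u=\ell(S(x))\alpha(u)+\beta(\ell(S(x))u),$$ $$\beta(\alpha(u)r(x))+u\,r(S^2(x))=\alpha(u)r(S(x))+\beta(u\,r(S(x))).$$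
   Context: Over a field $K$. A (right) perm algebra: bilinear product with $(xy)z=x(yz)=x(zy)$. A representation $(V,\ell,r)$: linear $\ell,r:\mathfrak g\to\mathrm{End}(V)$, left action $\ell(x)v$, right action $v\,r(x)$, with $v\,r(xy)=(v\,r(x))r(y)=(v\,r(y))r(x)$ and $\ell(xy)v=\ell(x)(\ell(y)v)=\ell(x)(v\,r(y))=(\ell(x)v)r(y)$. Nijenhuis operator $N$: $N(x)N(y)+N^2(xy)=N(N(x)y)+N(xN(y))$. A representation of $(\mathfrak g,N)$: $(V,\ell,r,\alpha)$ with $\ell(N(x))\alpha(v)+\alpha^2(\ell(x)v)=\alpha(\ell(N(x))v)+\alpha(\ell(x)\alpha(v))$ and $\alpha(v)r(N(x))+\alpha^2(v\,r(x))=\alpha(v\,r(N(x)))+\alpha(\alpha(v)r(x))$. $\mathfrak g\ltimes_{\ell,r}V$ is $\mathfrak g\oplus V$ with product $(x+u)(y+v)=xy+\ell(x)v+u\,r(y)$; $(N+\alpha)(x+u)=N(x)+\alpha(u)$, $(S+\beta)(x+u)=S(x)+\beta(u)$. Dual maps: $\langle\ell^*(x)u^*,v\rangle=\langle u^*,\ell(x)v\rangle$, $\langle u^*r^*(x),v\rangle=\langle u^*,v\,r(x)\rangle$, and $\alpha^*,\beta^*$ are the dual maps of $\alpha,\beta$; $\mathfrak g\ltimes_{r^*-\ell^*,r^*}V^*$ is $\mathfrak g\oplus V^*$ with product $(x+a)(y+b)=xy+(b\,r^*(x)-\ell^*(x)b)+a\,r^*(y)$. A linear map $S$ on a Nijenhuis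 perm algebra $(A,N)$ is admissible to $(A,N)$ if $S(N(x)y)+xS^2(y)-N(x)S(y)-S(xS(y))=0$ and $S(xN(y))+S^2(x)y-S(x)N(y)-S(S(x)y)=0$ for all $x,y\in A$. $\beta$ is admissible to $(\mathfrak g,N)$ on $(V,\ell,r)$ if for all $x\in\mathfrak g,u\in V$: $\beta(\ell(N(x))u)+\ell(x)\beta^2(u)-\ell(N(x))\beta(u)-\beta(\ell(x)\beta(u))=0$ and $\beta(u\,r(N(x)))+\beta^2(u)r(x)-\beta(u)r(N(x))-\beta(\beta(u)r(x))=0$. *)

From HB Require Import structures.
From mathcomp Require Import all_boot all_algebra.
Set Implicit Arguments. Unset Strict Implicit. Unset Printing Implicit Defensive.
Import GRing.Theory.
Local Open Scope ring_scope.

Section PermDefs.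
Variable K : fieldType.

Definition lin (A B : lmodType K) (f : A -> B) :=
  forall (a : K) (u v : A), f (a *: u + v) = a *: f u + f v.

Definition bilin (A : lmodType K) (mul : A -> A -> A) :=
  (forall x, lin (mul x)) /\ (forall y, lin (fun x => mul x y)).

Definition perm_algebra (A : lmodType K) (mul : A -> A -> A) :=
  bilin mul /\
  forall x y z, mul (mul x y) z = mul x (mul y z) /\ mul x (mul y z) = mul x (mul z y).

Definition nijenhuis (A : lmodType K) (mul : A -> A -> A) (N : A -> A) :=
  forall x y, mul (N x) (N y) + N (N (mul x y)) = N (mul (N x) y) + N (mul x (N y)).

Definition nijenhuis_perm_algebra (A : lmodType K) (mul : A -> A -> A) (N : A -> A) :=
  perm_algebra mul /\ lin N /\ nijenhuis mul N.

Definition admissible (A : lmodType K) (mul : A -> A -> A) (N S : A -> A) :=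
  forall x y,
    S (mul (N x) y) + mul x (S (S y)) - mul (N x) (S y) - S (mul x (S y)) = 0 /\
    S (mul x (N y)) + mul (S (S x)) y - mul (S x) (N y) - S (mul (S x) y) = 0.

(* representation (V, l, r) of the perm algebra (g, mul);
   l x v stands for l(x)v (left action), r x v stands for v r(x) (right action) *)
Definition representation (g V : lmodType K) (mul : g -> g -> g)
    (l r : g -> V -> V) :=
  [/\ (forall x, lin (l x)), (forall x, lin (r x)),
      (forall v, lin (fun x => l x v)) & (forall v, lin (fun x => r x v))] /\
  ((forall x y v, r (mul x y) v = r y (r x v) /\ r y (r x v) = r x (r y v)) /\
      (forall x y v, [/\ l (mul x y) v = l x (l y v), l x (l y v) = l x (r y v)
                     & l x (r y v) = r y (l x v)])).

Definition nij_representation (g V : lmodType K) (N : g -> g)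
    (l r : g -> V -> V) (alpha : V -> V) :=
  forall x v,
    l (N x) (alpha v) + alpha (alpha (l x v)) = alpha (l (N x) v) + alpha (l x (alpha v)) /\
    r (N x) (alpha v) + alpha (alpha (r x v)) = alpha (r (N x) v) + alpha (r x (alpha v)).

Definition admissible_rep (g V : lmodType K) (N : g -> g)
    (l r : g -> V -> V) (beta : V -> V) :=
  forall x u,
    beta (l (N x) u) + l x (beta (beta u)) - l (N x) (beta u) - beta (l x (beta u)) = 0 /\
    beta (r (N x) u) + r x (beta (beta u)) - r (N x) (beta u) - beta (r x (beta u)) = 0.

Definition sdprod_mul (g V : lmodType K) (mul : g -> g -> g)
    (l r : g -> V -> V) (p q : g * V) : g * V :=
  (mul p.1 q.1, l p.1 q.2 + r q.1 p.2).

Definition summap (g V : lmodType K) (N : g -> g) (alpha : V -> V) (p : g * V) : g * V :=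
  (N p.1, alpha p.2).

(* dual space V^* := Hom(V, K), pairing <f, v> = f v *)
Definition dualv (V : vectType K) := 'Hom(V, K^o).

(* dual map of an endomorphism: <phi^* f, v> = <f, phi v>, i.e. phi^* f = f o phi *)
Definition dualmap (V : vectType K) (phi : 'End(V)) (f : dualv V) : dualv V :=
  (f \o phi)%VF.

End PermDefs.

From HB Require Import structures.
From mathcomp Require Import all_boot all_algebra ring.
Import GRing.Theory.
Local Open Scope ring_scope.

(* Evaluating the Nijenhuis and admissibility identities of g ⋉ V on the
   test pairs (x, 0) and (0, u) isolates the g-identities and the conditions
   (a)-(d); conversely, by bilinearity the component identities add up to the
   identities on arbitrary pairs.  For the dual representation, the pairing
   <f, v> turns the conditions on V^* into the transposed conditions on V:
   since V^* acts on the left by r^* - l^*, its left conditions pair with the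
   difference of the r- and l-conditions on V, and finite dimensionality lets
   the functionals separate points.  In this transposition, (a) for alpha
   becomes admissibility of alpha^*, admissibility of beta becomes (a) for
   beta^*, and (d) is carried to itself with alpha and beta exchanged. *)

Lemma linD {K : fieldType} {A B : lmodType K} {f : A -> B} :
  lin f -> forall u v, f (u + v) = f u + f v.
Proof. by move=> Hf u v; have := Hf 1 u v; rewrite !scale1r. Qed.

Lemma lin0 {K : fieldType} {A B : lmodType K} {f : A -> B} : lin f -> f 0 = 0.
Proof. by move=> Hf; have := Hf (-1) 0 0; rewrite !scaleN1r oppr0 addr0 addNr. Qed.

Lemma lin_lfun {K : fieldType} {U W : vectType K} (f : 'Hom(U, W)) : lin f.
Proof. by move=> a u v; rewrite linearP. Qed.

Lemma scale_pairE {K : fieldType} {A B : lmodType K} (a : K) (x : A) (y : B) :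
  a *: (x, y) = (a *: x, a *: y).
Proof. by []. Qed.

Lemma lin_summap {K : fieldType} {g W : lmodType K} {N : g -> g} {al : W -> W} :
  lin N -> lin al -> lin (summap N al).
Proof. by move=> HN Hal a [x u] [y v]; rewrite /summap /= HN Hal. Qed.

Lemma subr2_eq0 {M : zmodType} (a b c d : M) : a + b - c - d = 0 <-> a + b = c + d.
Proof.
rewrite -addrA -opprD; split=> [/eqP | ->]; last exact: subrr.
by rewrite subr_eq0 => /eqP.
Qed.

Lemma eq_addrACA {M : zmodType} (a1 b1 c1 d1 a2 b2 c2 d2 : M) :
  a1 + b1 = c1 + d1 -> a2 + b2 = c2 + d2 ->
  (a1 + a2) + (b1 + b2) = (c1 + c2) + (d1 + d2).
Proof. by move=> E1 E2; rewrite addrACA E1 E2 [RHS]addrACA. Qed.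

Lemma subr2_eq0_addrACA {M : zmodType} (a1 b1 c1 d1 a2 b2 c2 d2 : M) :
  a1 + b1 - c1 - d1 = 0 -> a2 + b2 - c2 - d2 = 0 ->
  (a1 + a2) + (b1 + b2) - (c1 + c2) - (d1 + d2) = 0.
Proof. by move=> /subr2_eq0 E1 /subr2_eq0 E2; apply/subr2_eq0/eq_addrACA. Qed.

Section SemidirectProduct.
Set Implicit Arguments.
Unset Strict Implicit.
Variables (K : fieldType) (g W : lmodType K) (mul : g -> g -> g) (N S : g -> g)
  (l r : g -> W -> W) (al be : W -> W).
Hypotheses (Hl : forall x, lin (l x)) (Hr : forall x, lin (r x))
  (Hal : lin al) (Hbe : lin be).

Definition compatible :=
  forall x u,
    be (l x (al u)) + l (S (S x)) u = l (S x) (al u) + be (l (S x) u) /\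
    be (r x (al u)) + r (S (S x)) u = r (S x) (al u) + be (r (S x) u).

Let l0 x : l x 0 = 0. Proof. exact: lin0. Qed.
Let r0 x : r x 0 = 0. Proof. exact: lin0. Qed.
Let al0 : al 0 = 0. Proof. exact: lin0. Qed.
Let be0 : be 0 = 0. Proof. exact: lin0. Qed.

Lemma sdprod_perm_algebra : perm_algebra mul -> representation mul l r ->
  perm_algebra (sdprod_mul mul l r).
Proof.
move=> [[Hm1 Hm2] Hm] [[Hlv Hrv Hlx Hrx] [Hrr Hll]]; split; first split.
- move=> [x u] a [y v] [z w]; rewrite /sdprod_mul /=; congr pair; first exact: Hm1.
  by rewrite scale_pairE /= (Hlv x) (Hrx u) scalerDr addrACA.
- move=> [y v] a [x u] [z w]; rewrite /sdprod_mul /=; congr pair; first exact: Hm2.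
  by rewrite scale_pairE /= (Hlx v) (Hrv y) scalerDr addrACA.
move=> [x u] [y v] [z w]; rewrite /sdprod_mul /=.
have [Lxy Lxy' _] := Hll x y w; have [_ Lxz Lxz'] := Hll x z v.
have [Ryz Ryz'] := Hrr y z u; have [Rzy _] := Hrr z y u.
split; congr pair; try by case: (Hm x y z).
- by rewrite (linD (Hrv z)) (linD (Hlv x)) Lxy -Lxz' Ryz addrA.
- by rewrite !(linD (Hlv x)) Lxy' -Lxz Ryz Ryz' Rzy [l x (r y w) + _]addrC.
Qed.

Lemma sdprod_nijenhuisE : nijenhuis mul N ->
  nijenhuis (sdprod_mul mul l r) (summap N al) <-> nij_representation N l r al.
Proof.
move=> HN; rewrite /sdprod_mul /summap; split.
- move=> H x v; split.
  + have := congr1 snd (H (x, 0) (0, v)).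
    by rewrite /= ?al0 ?l0 ?r0 ?add0r ?addr0.
  + have := congr1 snd (H (0, v) (x, 0)).
    by rewrite /= ?al0 ?l0 ?r0 ?add0r ?addr0 [in RHS]addrC.
- move=> H [x u] [y v] /=; congr pair; first exact: HN.
  rewrite !(linD Hal); apply: eq_addrACA; first by case: (H x v).
  by case: (H y u) => _ ->; rewrite addrC.
Qed.

Lemma sdprod_admissibleE :
  admissible (sdprod_mul mul l r) (summap N al) (summap S be) <->
  [/\ admissible mul N S, admissible_rep N l r be & compatible].
Proof.
rewrite /sdprod_mul /summap; split.
- move=> H; split.
  + move=> x y; have [H1 H2] := H (x, 0) (y, 0).
    by split; [move: (congr1 fst H1) | move: (congr1 fst H2)].
  + move=> x u; have [H1 _] := H (x, 0) (0, u); have [_ H2] := H (0, u) (x, 0).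
    move: (congr1 snd H1) (congr1 snd H2) => /=.
    by rewrite ?al0 ?be0 ?l0 ?r0 ?add0r ?addr0 ?subr0 ?sub0r.
  + move=> x u; have [_ H1] := H (x, 0) (0, u); have [H2 _] := H (0, u) (x, 0).
    move: (congr1 snd H1) (congr1 snd H2) => /=.
    by rewrite ?al0 ?be0 ?l0 ?r0 ?add0r ?addr0 ?subr0 ?sub0r => /subr2_eq0 -> /subr2_eq0 ->.
- move=> [HS Hb Hd] [x u] [y v] /=; split; congr pair.
  + by case: (HS x y).
  + rewrite !(linD Hbe); apply: subr2_eq0_addrACA; first by case: (Hb x v).
    by case: (Hd y u) => _ /subr2_eq0.
  + by case: (HS x y).
  + rewrite !(linD Hbe); apply: subr2_eq0_addrACA; last by case: (Hb y u).
    by case: (Hd x v) => /subr2_eq0.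
Qed.

End SemidirectProduct.

Lemma sdprod_nijenhuis_admissibleE {K : fieldType} {g W : lmodType K}
    {mul : g -> g -> g} {N : g -> g} (S : g -> g) {l r : g -> W -> W}
    {al be : W -> W} :
  lin al -> lin be -> nijenhuis_perm_algebra mul N -> representation mul l r ->
  nijenhuis_perm_algebra (sdprod_mul mul l r) (summap N al)
    /\ admissible (sdprod_mul mul l r) (summap N al) (summap S be) <->
  [/\ nij_representation N l r al, admissible mul N S,
      admissible_rep N l r be & compatible S l r al be].
Proof.
move=> Hal Hbe [Hperm [HNlin HN]] Hrep.
have [[Hl Hr _ _] _] := Hrep.
rewrite sdprod_admissibleE //; split.
- by move=> [[_ [_ /(sdprod_nijenhuisE Hl Hr Hal HN) Hal']] [HS Hb Hd]].
- move=> [Hal' HS Hb Hd]; split=> //; split; first exact: sdprod_perm_algebra.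
  by split; [exact: lin_summap | exact/(sdprod_nijenhuisE Hl Hr Hal HN)].
Qed.

Lemma dualv_separates {K : fieldType} {V : vectType K} (w : V) :
  (forall f : dualv V, f w = 0) -> w = 0.
Proof.
move=> Hw; rewrite (coord_vbasis (memvf w)); apply: big1 => i _.
have := Hw (linfun (coord (vbasis fullv) i : V -> K^o)).
by rewrite lfunE /= => ->; rewrite scale0r.
Qed.

Definition lfE := (add_lfunE, scale_lfunE, comp_lfunE, opp_lfunE, zero_lfunE).

Section DualRepresentation.
Set Implicit Arguments.
Unset Strict Implicit.
Variables (K : fieldType) (g : lmodType K) (V : vectType K) (mul : g -> g -> g)
  (l r : g -> 'End(V)).

Definition ldual x (f : dualv V) := dualmap (r x) f - dualmap (l x) f.
Definition rdual x (f : dualv V) := dualmap (r x) f.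

Lemma lin_dualmap (phi : 'End(V)) : lin (dualmap phi).
Proof. by move=> a f h; apply/lfunP => v; rewrite /dualmap !lfE. Qed.

Lemma dual_representation : representation mul (fun x => l x) (fun x => r x) ->
  representation mul ldual rdual.
Proof.
move=> [[_ _ Hlx Hrx] [Hrr Hll]]; split; [split|split].
- move=> x a f h; apply/lfunP => v; rewrite /ldual /dualmap !lfE /=; ring.
- move=> x a f h; apply/lfunP => v; rewrite /rdual /dualmap !lfE /=; ring.
- move=> f a x y; apply/lfunP => v; rewrite /ldual /dualmap !lfE /=.
  rewrite (Hlx v) (Hrx v) !linearP /=; ring.
- move=> f a x y; apply/lfunP => v; rewrite /rdual /dualmap !lfE /=.
  by rewrite (Hrx v) !linearP.
- move=> x y f; split; apply/lfunP => v; rewrite /rdual /dualmap !lfE /=.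
  + by rewrite (Hrr x y v).1 (Hrr x y v).2.
  + by rewrite (Hrr x y v).2.
- move=> x y f; split; apply/lfunP => v; rewrite /ldual /rdual /dualmap !lfE /=;
  have [L1 L2 L3] := Hll x y v; have [_ L4 _] := Hll y x v; have [R1 R2] := Hrr x y v;
  rewrite ?R1 ?L1 ?L2 -?L4 -?L3 -?R2; ring.
Qed.

(* [Wl] and [Wr] are the defects of the transposed l- and r-conditions on V. *)
Lemma dual_conditionsE (A1 B1 A2 B2 : g -> dualv V -> dualv V) (Wl Wr : g -> V -> V)
    (Pl Pr : g -> V -> Prop) :
  (forall x f v, (A1 x f - B1 x f) v = f (Wr x v - Wl x v)) ->
  (forall x f v, (A2 x f - B2 x f) v = f (Wr x v)) ->
  (forall x v, Wl x v = 0 <-> Pl x v) ->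
  (forall x v, Wr x v = 0 <-> Pr x v) ->
  (forall x f, A1 x f = B1 x f /\ A2 x f = B2 x f) <->
  (forall x v, Pl x v /\ Pr x v).
Proof.
move=> E1 E2 HPl HPr; split=> [H x v | H x f].
- have Wr0 : Wr x v = 0.
    by apply: dualv_separates => f; rewrite -E2 (H x f).2 subrr zero_lfunE.
  have Wrl0 : Wr x v - Wl x v = 0.
    by apply: dualv_separates => f; rewrite -E1 (H x f).1 subrr zero_lfunE.
  have /eqP Wl0 : Wl x v == 0 by rewrite -oppr_eq0 -Wrl0 Wr0 sub0r.
  by split; [apply/HPl | apply/HPr].
- split; apply/eqP; rewrite -subr_eq0; apply/eqP/lfunP => v;
  have [/HPl Wl0 /HPr Wr0] := H x v;
  by rewrite ?E1 ?E2 ?Wl0 Wr0 ?subrr linear0 zero_lfunE.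
Qed.

Lemma dual_nij_representationE (N : g -> g) (be : 'End(V)) :
  nij_representation N ldual rdual (dualmap be) <->
  admissible_rep N (fun x => l x) (fun x => r x) be.
Proof.
rewrite /nij_representation /admissible_rep.
apply: (dual_conditionsE
  (Wl := fun x v => be (l (N x) v) + l x (be (be v)) - l (N x) (be v) - be (l x (be v)))
  (Wr := fun x v => be (r (N x) v) + r x (be (be v)) - r (N x) (be v) - be (r x (be v)))).
- move=> x f v; rewrite /ldual /dualmap !lfE /= !linearB !linearD /=; ring.
- move=> x f v; rewrite /rdual /dualmap !lfE /= !linearB !linearD /=; ring.
- by [].
- by [].
Qed.

Lemma dual_admissible_repE (N : g -> g) (al : 'End(V)) :
  admissible_rep N ldual rdual (dualmap al) <->
  nij_representation N (fun x => l x) (fun x => r x) al.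
Proof.
rewrite /nij_representation /admissible_rep.
apply: (dual_conditionsE
  (Wl := fun x v => l (N x) (al v) + al (al (l x v)) - al (l (N x) v) - al (l x (al v)))
  (Wr := fun x v => r (N x) (al v) + al (al (r x v)) - al (r (N x) v) - al (r x (al v)))).
- move=> x f v; rewrite subr0 /ldual /dualmap !lfE /= !linearB !linearD /=; ring.
- move=> x f v; rewrite subr0 /rdual /dualmap !lfE /= !linearB !linearD /=; ring.
- by move=> x v; apply: subr2_eq0.
- by move=> x v; apply: subr2_eq0.
Qed.

Lemma dual_compatibleE (S : g -> g) (al be : 'End(V)) :
  compatible S ldual rdual (dualmap be) (dualmap al) <->
  compatible S (fun x => l x) (fun x => r x) al be.
Proof.
rewrite /compatible.
apply: (dual_conditionsE
  (Wl := fun x v => be (l x (al v)) + l (S (S x)) v - l (S x) (al v) - be (l (S x) v))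
  (Wr := fun x v => be (r x (al v)) + r (S (S x)) v - r (S x) (al v) - be (r (S x) v))).
- move=> x f v; rewrite /ldual /dualmap !lfE /= !linearB !linearD /=; ring.
- move=> x f v; rewrite /rdual /dualmap !lfE /= !linearB !linearD /=; ring.
- by move=> x v; apply: subr2_eq0.
- by move=> x v; apply: subr2_eq0.
Qed.

End DualRepresentation.

Theorem theorem2p40 (K : fieldType) (g V : vectType K)
    (mul : g -> g -> g) (N : 'End(g))
    (l r : g -> 'End(V))
    (S : 'End(g)) (alpha beta : 'End(V)) :
  nijenhuis_perm_algebra mul N ->
  representation mul (fun x => l x) (fun x => r x) ->
  let P1 :=
    nijenhuis_perm_algebra (sdprod_mul mul (fun x => l x) (fun x => r x)) (summap N alpha)
    /\ admissible (sdprod_mul mul (fun x => l x) (fun x => r x))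
                  (summap N alpha) (summap S beta) in
  (* dual: left action r^* - l^*, right action r^*, with
     l^*(x) f = dualmap (l x) f and  f r^*(x) = dualmap (r x) f *)
  let ld := fun x (f : dualv V) => dualmap (r x) f - dualmap (l x) f in
  let rd := fun x (f : dualv V) => dualmap (r x) f in
  let P2 :=
    nijenhuis_perm_algebra (sdprod_mul mul ld rd) (summap N (dualmap beta))
    /\ admissible (sdprod_mul mul ld rd) (summap N (dualmap beta))
                  (summap S (dualmap alpha)) in
  let P3 :=
    [/\ nij_representation N (fun x => l x) (fun x => r x) alpha,
        admissible mul N S,
        admissible_rep N (fun x => l x) (fun x => r x) beta &
        forall x u,
          beta (l x (alpha u)) + l (S (S x)) u = l (S x) (alpha u) + beta (l (S x) u) /\
          beta (r x (alpha u)) + r (S (S x)) u = r (S x) (alpha u) + beta (r (S x) u)] in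
  (P1 <-> P3) /\ (P2 <-> P3).
Proof.
move=> HgN Hrep P1 ld rd P2 P3; split.
  exact: (sdprod_nijenhuis_admissibleE S (lin_lfun alpha) (lin_lfun beta) HgN Hrep).
have Hrep_dual := dual_representation Hrep.
rewrite /P2 (sdprod_nijenhuis_admissibleE S (lin_dualmap beta) (lin_dualmap alpha)
               HgN Hrep_dual).
split=> [[Hb Hs Ha Hc] | [Ha Hs Hb Hc]].
- split=> //; [exact/dual_admissible_repE | exact/dual_nij_representationE
             | exact/dual_compatibleE].
- split=> //; [exact/dual_nij_representationE | exact/dual_admissible_repE
             | exact/dual_compatibleE].
Qed.
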